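(* Let $k\ge1$ and let $M_k$ be the set of LTI probability measures on $X_k=\{0,1\}^{\{0,\ldots,k\}}$. Then: (i) the map ${\cal C}\mapsto\nu_{\cal C}$ is a bijection from the set of cycles of the de Bruijn graph $G_k$ onto the set of $k$-primitive BPC measures on $\{0,1\}^{\mathbb{Z}}$; (ii) the extreme points of the convex polytope $M_k$ are exactly the measures $\pi_k\nu_{\cal C}$ with ${\cal C}$ a cycle of $G_k$; (iii) every $\mu_k\in M_k$ equals $\pi_k\nu$ for some finite convex combination $\nu$ of $k$-primitive BPC measures $\nu_{\cal C}$; in particular every $\mu_k\in M_k$ has a translation invariant extension to $\{0,1\}^{\mathbb{Z}}$ which is a PC measure.
   Context: LTI: for all subsets $A,A'\subset\{0,\ldots,k\}$ with $A'$ a translate of $A$, the marginal on $\{0,1\}^{A'}$ is the translate of the marginal on $\{0,1\}^A$. $\pi_k\nu$ is the marginal of a measure $\nu$ on $\{0,1\}^{\mathbb{Z}}$ on the coordinates $0,\ldots,k$. The binary de Bruijn graph $G_k$ of order $k$ is the directed graph whose vertices are the binary strings of length $k$ and whose edges are the binary strings of length $k+1$, the edge $a\theta b$ ($a,b\in\{0,1\}$, $\theta$ a string of length $k-1$) going from vertex $a\theta$ to vertex $\theta b$ (so there are loops at $0^k$ and $1^k$). A cycle is a closed directed path with no repeated vertex (loops count as cycles), considered up to cyclic rotation of its starting point. For a minimal closed path $P$ with edges $\eta^{(1)},\ldots,\eta^{(p)}$ in order (minimal meaning it is not a repetition of a shorter closed path), the associated periodic configuration is obtained by traversing $P$ repeatedly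 and recording the first symbol $\eta^{(j)}_0$ of each edge, and $\nu_P$ is the measure giving mass $1/p$ to each of the $p$ translates of this configuration. A PC measure is a translation invariant probability measure on $\{0,1\}^{\mathbb{Z}}$ supported on periodic configurations; a BPC measure is one giving mass $1/p$ to each of the $p$ translates of a single configuration of minimal period $p$. A periodic configuration $\eta$ of minimal period $p$ (and its BPC measure) is $k$-primitive if $\eta_i\cdots\eta_{i+k-1}=\eta_j\cdots\eta_{j+k-1}$ only when $p$ divides $j-i$. *)

From HB Require Import structures.
From mathcomp Require Import all_boot all_order all_algebra.
Set Implicit Arguments. Unset Strict Implicit. Unset Printing Implicit Defensive.
Import Order.TTheory GRing.Theory Num.Theory.
Local Open Scope ring_scope.

Definition config := int -> bool.

Definition is_period (eta : config) (p : nat) : Prop :=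
  forall i : int, eta (i + p%:Z) = eta i.

Definition min_period (eta : config) (p : nat) : Prop :=
  [/\ (0 < p)%N, is_period eta p &
      forall q : nat, (0 < q)%N -> is_period eta q -> (p <= q)%N].

(* A probability measure on {0,1}^Z is represented by its values on the
   cylinder sets  { eta | eta_(n+j) = w_j for all j < size w }  (n : int,
   w : seq bool).  Cylinder sets form a pi-system generating the product
   sigma-algebra, so two measures are equal iff these functions are equal. *)
Definition cylmeasure (R : Type) := int -> seq bool -> R.

Definition in_cyl (eta : config) (m : int) (n : int) (w : seq bool) : bool :=
  [forall j : 'I_(size w), eta (m + n + (j : nat)%:Z) == nth false w j].

(* The measure giving mass 1/p to each of the p translates eta(. + m),
   0 <= m < p, of a configuration eta of period p. *)
Definition bpc_of (R : realFieldType) (eta : config) (p : nat) : cylmeasure R :=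
  fun n w => (#|[set m : 'I_p | in_cyl eta (m : nat)%:Z n w]|%:R) / p%:R.

Definition is_BPC (R : realFieldType) (nu : cylmeasure R) : Prop :=
  exists (eta : config) (p : nat), min_period eta p /\ nu = bpc_of R eta p.

Definition k_primitive (k : nat) (eta : config) (p : nat) : Prop :=
  forall i j : int,
    (forall l : nat, (l < k)%N -> eta (i + l%:Z) = eta (j + l%:Z)) ->
    (p%:Z %| j - i)%Z.

Definition is_kprim_BPC (R : realFieldType) (k : nat) (nu : cylmeasure R) : Prop :=
  exists (eta : config) (p : nat),
    [/\ min_period eta p, k_primitive k eta p & nu = bpc_of R eta p].

(* vertices: k.-tuple bool; edge a.theta -> theta.b *)
Definition dB_edge (k : nat) (u v : k.-tuple bool) : bool :=
  drop 1 (val u) == take k.-1 (val v).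

(* A cycle, given by the list of its vertices in order (nonempty, no repeated
   vertex, consecutive vertices -- cyclically -- joined by an edge).  Since
   there is at most one edge between two vertices, this determines the cycle.
   Cycles are considered up to rotation (see theorem3). *)
Definition dB_cycle (k : nat) (c : seq (k.-tuple bool)) : bool :=
  [&& c != [::], uniq c & cycle (@dB_edge k) c].

(* The periodic configuration associated with the cycle: record the first
   symbol of each edge, i.e. the first symbol of each source vertex. *)
Definition cycle_config (k : nat) (c : seq (k.-tuple bool)) : config :=
  fun i => nth false [seq nth false (val v) 0 | v <- c]
                     (absz (i %% (size c)%:Z)%Z).

Definition nu_C (R : realFieldType) (k : nat) (c : seq (k.-tuple bool)) : cylmeasure R :=
  bpc_of R (cycle_config c) (size c).

Definition Xk (k : nat) := (k.+1).-tuple bool.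

Definition pi_k (R : realFieldType) (k : nat) (nu : cylmeasure R) : {ffun Xk k -> R} :=
  [ffun x : Xk k => nu 0 (val x)].

(* local translation invariance: for A a subset of {0..k} and A' = A + t also
   inside {0..k}, the marginal on A' is the translate of the marginal on A. *)
Definition LTI (R : realFieldType) (k : nat) (mu : {ffun Xk k -> R}) : Prop :=
  forall (A : {set 'I_k.+1}) (t : nat) (y : nat -> bool),
    (forall i : 'I_k.+1, i \in A -> (i + t <= k)%N) ->
    \sum_(x : Xk k | [forall i in A, tnth x i == y i]) mu x =
    \sum_(x : Xk k | [forall i in A, nth false (val x) (i + t) == y i]) mu x.

Definition in_Mk (R : realFieldType) (k : nat) (mu : {ffun Xk k -> R}) : Prop :=
  [/\ forall x, 0 <= mu x, \sum_x mu x = 1 & LTI mu].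

Definition extreme_Mk (R : realFieldType) (k : nat) (mu : {ffun Xk k -> R}) : Prop :=
  in_Mk mu /\
  forall (a b : {ffun Xk k -> R}) (t : R),
    in_Mk a -> in_Mk b -> 0 < t < 1 ->
    (forall x, mu x = t * a x + (1 - t) * b x) -> a = b.

Definition comb_nuC (R : realFieldType) (k : nat)
    (s : seq (R * seq (k.-tuple bool))) : cylmeasure R :=
  fun n w => \sum_(cw <- s) cw.1 * nu_C R cw.2 n w.

From HB Require Import structures.
From mathcomp Require Import all_boot all_order all_algebra zify ring lra.
From Stdlib Require Import FunctionalExtensionality.
Import Order.TTheory GRing.Theory Num.Theory.
Local Open Scope ring_scope.
Set Implicit Arguments. Unset Strict Implicit. Unset Printing Implicit Defensive.

(* An element of M_k is a nonnegative circulation on the de Bruijn graph G_k: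
   the words of length k+1 are its edges, and local translation invariance
   says that at every vertex the mass leaving equals the mass entering.  The
   marginal of nu_C is the uniform flow on the edges of C.  Following edges
   of positive mass from any such edge must close up, so the support of a
   nonzero circulation contains a cycle C; subtracting the largest multiple of
   pi_k nu_C that keeps the flow nonnegative kills an edge, and induction on
   the size of the support gives (iii).  A circulation supported on a single
   cycle is constant along it, which makes pi_k nu_C extreme; an extreme point
   equals the cycle peeled off from it, which gives (ii).  For (i), the length
   k windows of the configuration of C are the vertices of C in order, hence
   k-primitivity, and the windows of a k-primitive configuration of minimal
   period p form a cycle of length p. *)

Lemma nth_rot_mod (T : Type) (x0 : T) (s : seq T) n j :
  (n <= size s)%N -> (j < size s)%N ->
  nth x0 (rot n s) j = nth x0 s ((n + j) %% size s).
Proof.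
move=> hn hj; rewrite /rot nth_cat size_drop.
case: ltnP => h.
- by rewrite nth_drop modn_small //; lia.
- rewrite nth_take; last lia.
  have -> : (n + j = size s + (j - (size s - n)))%N by lia.
  by rewrite modnDl modn_small; [congr nth; lia | lia].
Qed.

Lemma cycle_nthP (T : Type) (x0 : T) (e : rel T) (c : seq T) :
  cycle e c <-> (forall j, (j < size c)%N -> e (nth x0 c j) (nth x0 c (j.+1 %% size c))).
Proof.
case: c => [|x p] //=.
have Hn j : (j < (size p).+1)%N ->
   nth x0 (x :: rcons p x) j = nth x0 (x :: p) j /\
   nth x0 (rcons p x) j = nth x0 (x :: p) (j.+1 %% (size p).+1).
  move=> hj; rewrite -rcons_cons !nth_rcons /= hj.
  case: ltnP => hjp; first by rewrite modn_small.
  have -> : j = size p by lia.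
  by rewrite eqxx modnn.
split.
- move/(pathP x0) => H j hj; have := H j; rewrite size_rcons => /(_ hj).
  by case: (Hn j hj) => -> ->.
- move=> H; apply/(pathP x0) => j; rewrite size_rcons => hj.
  by case: (Hn j hj) => -> ->; apply: H.
Qed.

Lemma modz_absz (p : nat) (i : int) : (0 < p)%N -> (i %% p%:Z)%Z = `|(i %% p%:Z)%Z|%N%:Z.
Proof. by move=> p0; rewrite gez0_abs // modz_ge0 // lt0n_neq0. Qed.

Lemma ltn_absz_modz (p : nat) (i : int) : (0 < p)%N -> (`|(i %% p%:Z)%Z| < p)%N.
Proof.
move=> p0; have : ((i %% p%:Z)%Z < p%:Z) by rewrite ltz_pmod // ltz_nat.
by rewrite modz_absz // ltz_nat.
Qed.

Lemma eq_tuple_nth (T : Type) (x0 : T) (n : nat) (u v : n.-tuple T) :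
  (forall l, (l < n)%N -> nth x0 u l = nth x0 v l) -> u = v.
Proof.
move=> H; apply/val_inj/(eq_from_nth (x0:=x0)); first by rewrite !size_tuple.
by move=> l; rewrite size_tuple; apply: H.
Qed.

Lemma sum_nat_shift (g : nat -> nat) (p s : nat) : (forall m, g (m + p)%N = g m) ->
  (\sum_(m < p) g (m + s)%N = \sum_(m < p) g m)%N.
Proof.
move=> hg; elim: s => [|s IH]; first by apply: eq_bigr => m _; rewrite addn0.
rewrite -IH; case: p hg {IH} => [|p] hg; first by rewrite !big_ord0.
rewrite big_ord_recr big_ord_recl /= addnC; congr (_ + _)%N.
  by rewrite -(hg (0 + s)%N); congr g; lia.
by apply: eq_bigr => i _; rewrite /bump /= add1n addnS addSn.
Qed.

Lemma sum_nat_neq0P (p : nat) (P : pred 'I_p) :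
  reflect (exists m, P m) (\sum_(m < p) nat_of_bool (P m) != 0)%N.
Proof.
apply: (iffP idP) => [|[m Pm]]; last by rewrite (bigD1 m) //= Pm.
case: (pickP P) => [m Pm|H]; first by exists m.
by rewrite big1 ?eqxx // => m _; rewrite H.
Qed.

Lemma big_pred1_support (R : realFieldType) (T : finType) (P : pred T) (G : T -> R) x0 :
  P x0 -> (forall x, P x -> x != x0 -> G x = 0) -> \sum_(x | P x) G x = G x0.
Proof.
move=> P0 H; rewrite (bigD1 x0) //= big1 ?addr0 // => x /andP[]; exact: H.
Qed.

(** * Periodic configurations and their windows *)

Section Periodic.
Variables (eta : config) (p : nat).
Hypothesis eta_p : is_period eta p.

Lemma is_periodMn (i : int) (n : nat) : eta (i + n%:Z * p%:Z) = eta i.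
Proof.
elim: n => [|n IH]; first by rewrite mul0r addr0.
by rewrite -[in RHS]IH -[in RHS]eta_p; congr eta; rewrite intS; ring.
Qed.

Lemma is_periodMz (i z : int) : eta (i + z * p%:Z) = eta i.
Proof.
case: (intP z) => [|n|n]; first by rewrite mul0r addr0.
- exact: is_periodMn.
- by rewrite -(is_periodMn _ n.+1); congr eta; ring.
Qed.

Lemma is_period_modz (i : int) : eta i = eta (i %% p%:Z)%Z.
Proof. by rewrite {1}(divz_eq i p) addrC is_periodMz. Qed.

End Periodic.

Definition wseq (eta : config) (i : int) (n : nat) : seq bool :=
  [seq eta (i + j%:Z) | j <- iota 0 n].

Lemma size_wseq eta i n : size (wseq eta i n) = n.
Proof. by rewrite size_map size_iota. Qed.

Lemma nth_wseq eta i n l : (l < n)%N -> nth false (wseq eta i n) l = eta (i + l%:Z).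
Proof. by move=> h; rewrite (nth_map 0%N) ?size_iota // nth_iota. Qed.

Definition window (eta : config) (n : nat) (i : int) : n.-tuple bool :=
  @Tuple n bool (wseq eta i n) (introT eqP (size_wseq eta i n)).

Lemma in_cyl_wseq eta m n w : in_cyl eta m n w = (wseq eta (m + n) (size w) == w).
Proof.
apply/forallP/eqP => [H|<- j].
- apply: (eq_from_nth (x0:=false)); rewrite size_wseq // => l hl.
  by rewrite nth_wseq //; apply/eqP/(H (Ordinal hl)).
- by have := ltn_ord j; rewrite {2}size_wseq => hj; rewrite nth_wseq.
Qed.

Lemma in_cyl_window eta k m (x : Xk k) : in_cyl eta m 0 (val x) = (window eta k.+1 m == x).
Proof. by rewrite in_cyl_wseq addr0 size_tuple. Qed.

Section BPC.
Variable R : realFieldType.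

Lemma bpc_of_sum eta p n w :
  bpc_of R eta p n w = (\sum_(m < p) in_cyl eta m n w : nat)%:R / p%:R.
Proof. by rewrite /bpc_of -sum1dep_card big_mkcond. Qed.

Lemma bpc_of_shift eta p s : is_period eta p ->
  bpc_of R (fun z => eta (z + s%:Z)) p = bpc_of R eta p.
Proof.
move=> eta_p; apply: functional_extensionality => n.
apply: functional_extensionality => w.
rewrite !bpc_of_sum; congr (_%:R / _).
rewrite -(@sum_nat_shift (fun m : nat => nat_of_bool (in_cyl eta m%:Z n w)) p s).
  apply: eq_bigr => m _; congr nat_of_bool; apply: eq_forallb => j.
  by rewrite PoszD; congr (eta _ == _); ring.
move=> m; congr nat_of_bool; apply: eq_forallb => j.
by rewrite PoszD -[in RHS]eta_p; congr (eta _ == _); ring.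
Qed.

Lemma pi_k_bpc_sum eta p k (Q : pred (Xk k)) :
  \sum_(x | Q x) pi_k k (bpc_of R eta p) x =
  (\sum_(m < p) Q (window eta k.+1 m) : nat)%:R / p%:R.
Proof.
under eq_bigr => x _ do rewrite ffunE bpc_of_sum.
rewrite -mulr_suml -natr_sum; congr (_%:R * _).
under eq_bigr => x _ do under eq_bigr => m _ do rewrite in_cyl_window.
rewrite exchange_big /=; apply: eq_bigr => m _.
case: (boolP (Q (window eta k.+1 m))) => hQ.
- rewrite (bigD1 (window eta k.+1 m)) //= eqxx big1 // => x /andP[_ hx].
  by rewrite eq_sym (negbTE hx).
- by rewrite big1 // => x hx; case: eqP => // E; rewrite E hx in hQ.
Qed.

Lemma bpc_of_in_Mk eta p k : (0 < p)%N -> is_period eta p ->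
  in_Mk (pi_k k (bpc_of R eta p)).
Proof.
move=> p0 eta_p; split.
- by move=> x; rewrite ffunE /bpc_of divr_ge0 // ler0n.
- rewrite (pi_k_bpc_sum eta p (xpredT : pred (Xk k))) big_const_ord iter_addn_0 mul1n divff //.
  by rewrite pnatr_eq0 -lt0n.
- move=> A t y hA; rewrite !pi_k_bpc_sum; congr (_%:R / _).
  pose g m := nat_of_bool [forall (i | i \in A), eta (m%:Z + (i : nat)%:Z) == y i].
  have g_p m : g (m + p)%N = g m.
    rewrite /g; congr nat_of_bool; apply: eq_forallb => i.
    by rewrite PoszD -addrA [(p%:Z + _)]addrC addrA eta_p.
  transitivity (\sum_(m < p) g m)%N.
    apply: eq_bigr => m _; rewrite /g; congr nat_of_bool; apply: eq_forallb_in => i _.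
    by rewrite (tnth_nth false) nth_wseq.
  rewrite -(sum_nat_shift t g_p).
  apply: eq_bigr => m _; rewrite /g; congr nat_of_bool; apply: eq_forallb_in => i hi.
  rewrite nth_wseq; last by have := hA i hi; lia.
  by rewrite !PoszD; congr (eta _ == _); ring.
Qed.

End BPC.

(** * The configuration of a cycle of G_k *)

Definition vertex0 (k : nat) : k.-tuple bool := nseq_tuple k false.

Lemma cycle_config_period k (c : seq (k.-tuple bool)) : is_period (cycle_config c) (size c).
Proof. by move=> i; rewrite /cycle_config modzDr. Qed.

Lemma dB_cycle_size_gt0 k (c : seq (k.-tuple bool)) : dB_cycle c -> (0 < size c)%N.
Proof. by case/and3P; case: c. Qed.

Lemma dB_cycle_uniq k (c : seq (k.-tuple bool)) : dB_cycle c -> uniq c.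
Proof. by case/and3P. Qed.

Lemma nth_dB_cycle_inj k (c : seq (k.-tuple bool)) i j : dB_cycle c ->
  (i < size c)%N -> (j < size c)%N -> nth (vertex0 k) c i = nth (vertex0 k) c j -> i = j.
Proof. by move=> /dB_cycle_uniq hc hi hj /eqP; rewrite nth_uniq // => /eqP. Qed.

Section CycleConfig.
Variables (k : nat) (c : seq (k.-tuple bool)).
Hypotheses (k_gt0 : (0 < k)%N) (hc : dB_cycle c).
Local Notation p := (size c).
Local Notation eta := (cycle_config c).
Let p_gt0 : (0 < p)%N := dB_cycle_size_gt0 hc.

Lemma cycle_config_nat (n : nat) : eta n = nth false (nth (vertex0 k) c (n %% p)) 0.
Proof. by rewrite /cycle_config modz_nat absz_nat (nth_map (vertex0 k)) // ltn_pmod. Qed.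

Lemma dB_edge_nth j : (j < p)%N ->
  dB_edge (nth (vertex0 k) c j) (nth (vertex0 k) c (j.+1 %% p)).
Proof. by case/and3P: hc => _ _ /(cycle_nthP (vertex0 k)); apply. Qed.

Lemma cycle_config_window_nat (l n : nat) : (l < k)%N ->
  eta (n%:Z + l%:Z) = nth false (nth (vertex0 k) c (n %% p)) l.
Proof.
elim: l n => [|l IH] n hl; first by rewrite addr0 cycle_config_nat.
have -> : n%:Z + l.+1%:Z = n.+1%:Z + l%:Z by rewrite !intS; ring.
rewrite IH; last by lia.
have /eqP e_n := dB_edge_nth (ltn_pmod n p_gt0).
have E : ((n %% p).+1 %% p = n.+1 %% p)%N by rewrite -addn1 modnDml addn1.
rewrite E in e_n.
have hl' : (l < k.-1)%N by lia.
by rewrite -(nth_take _ hl') -e_n nth_drop add1n.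
Qed.

Lemma cycle_config_window (i : int) (l : nat) : (l < k)%N ->
  eta (i + l%:Z) = nth false (nth (vertex0 k) c `|(i %% p%:Z)%Z|) l.
Proof.
move=> hl; rewrite {1}(divz_eq i p) -addrA addrC (is_periodMz (cycle_config_period c)).
rewrite [in LHS](modz_absz _ p_gt0) cycle_config_window_nat // modn_small //.
exact: ltn_absz_modz.
Qed.

Lemma cycle_config_window_inj (i j : int) :
  (forall l, (l < k)%N -> eta (i + l%:Z) = eta (j + l%:Z)) ->
  `|(i %% p%:Z)%Z|%N = `|(j %% p%:Z)%Z|%N.
Proof.
move=> H; apply: nth_dB_cycle_inj hc (ltn_absz_modz i p_gt0) (ltn_absz_modz j p_gt0) _.
apply: (eq_tuple_nth (x0:=false)) => l hl; rewrite -!cycle_config_window //; exact: H.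
Qed.

Lemma cycle_config_k_primitive : k_primitive k eta p.
Proof.
move=> i j H; have E := cycle_config_window_inj H.
by rewrite -eqz_mod_dvd (modz_absz i p_gt0) (modz_absz j p_gt0) E.
Qed.

Lemma cycle_config_min_period : min_period eta p.
Proof.
split=> [//|| q q_gt0 eta_q]; first exact: cycle_config_period.
rewrite leqNgt; apply/negP => q_lt_p.
have : `|(q%:Z %% p%:Z)%Z|%N = `|(0 %% p%:Z)%Z|%N.
  by apply: cycle_config_window_inj => l _; rewrite add0r addrC eta_q.
by rewrite !modz_nat !absz_nat modn_small // mod0n; lia.
Qed.

End CycleConfig.

(** * The cycle of a k-primitive configuration *)

Definition window_cycle (eta : config) (p k : nat) : seq (k.-tuple bool) :=
  mkseq (fun i => window eta k i%:Z) p.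

Section WindowCycle.
Variables (eta : config) (p k : nat).
Hypotheses (eta_min : min_period eta p) (eta_prim : k_primitive k eta p).
Let p_gt0 : (0 < p)%N. Proof. by case: eta_min. Qed.
Let eta_p : is_period eta p. Proof. by case: eta_min. Qed.

Lemma size_window_cycle : size (window_cycle eta p k) = p.
Proof. exact: size_mkseq. Qed.

Lemma cycle_config_window_cycle : (0 < k)%N -> cycle_config (window_cycle eta p k) = eta.
Proof.
move=> k_gt0; apply: functional_extensionality => z; rewrite /cycle_config size_window_cycle.
have hz := ltn_absz_modz z p_gt0.
rewrite (nth_map (vertex0 k)) ?size_window_cycle // nth_mkseq //= nth_wseq // addr0.
by rewrite -modz_absz // -(is_period_modz eta_p).
Qed.

Lemma dB_edge_window (i : int) : dB_edge (window eta k i) (window eta k (i + 1)).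
Proof.
rewrite /dB_edge /=; apply/eqP/(eq_from_nth (x0:=false)).
  by rewrite size_drop size_takel !size_wseq //; lia.
move=> l; rewrite size_drop size_wseq => hl.
rewrite nth_drop nth_take; last by lia.
by rewrite !nth_wseq; [congr eta; rewrite PoszD; ring | lia | lia].
Qed.

Lemma window_cycle_dB_cycle : (0 < k)%N -> dB_cycle (window_cycle eta p k).
Proof.
move=> k_gt0; apply/and3P; split.
- by rewrite -size_eq0 size_window_cycle -lt0n.
- apply/mkseq_uniqP => i j hi hj /(congr1 val) /= E.
  have : (p%:Z %| j%:Z - i%:Z)%Z.
    by apply: eta_prim => l hl; rewrite -(nth_wseq eta i%:Z hl) E nth_wseq.
  by rewrite -eqz_mod_dvd !modz_nat eqz_nat !modn_small // => /eqP.
- apply/(cycle_nthP (vertex0 k)) => j; rewrite size_window_cycle => hj.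
  rewrite !nth_mkseq ?ltn_pmod //.
  have -> : window eta k (j.+1 %% p)%N = window eta k (j%:Z + 1).
    apply: (eq_tuple_nth (x0:=false)) => l hl; rewrite !nth_wseq //.
    rewrite (is_period_modz eta_p) [in RHS](is_period_modz eta_p) -!PoszD !modz_nat.
    by congr (eta (Posz _)); rewrite modnDml; congr (_ %% _)%N; lia.
  exact: dB_edge_window.
Qed.

End WindowCycle.

Lemma cycle_config_rot k (c : seq (k.-tuple bool)) (i : nat) :
  (0 < size c)%N -> (i <= size c)%N ->
  cycle_config (rot i c) = fun z => cycle_config c (z + i%:Z).
Proof.
move=> p_gt0 hi; apply: functional_extensionality => z.
rewrite /cycle_config size_rot map_rot nth_rot_mod ?size_map ?ltn_absz_modz //.
rewrite -modzDml (modz_absz z p_gt0) -PoszD modz_nat absz_nat addnC.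
by rewrite (modz_absz z p_gt0).
Qed.

Lemma nu_C_rot (R : realFieldType) k (c : seq (k.-tuple bool)) (i : nat) :
  (0 < size c)%N -> nu_C R (rot i c) = nu_C R c.
Proof.
move=> p_gt0; case: (leqP i (size c)) => hi; last by rewrite rot_oversize // ltnW.
by rewrite /nu_C cycle_config_rot // size_rot bpc_of_shift //; exact: cycle_config_period.
Qed.

(* Measuring the cylinder of a window of length (size c' + k) of the
   configuration of c' locates c' inside c. *)
Lemma nu_C_eq_shift (R : realFieldType) k (c c' : seq (k.-tuple bool)) :
  (0 < k)%N -> dB_cycle c -> dB_cycle c' -> nu_C R c = nu_C R c' ->
  exists2 m, (m < size c)%N & forall j, (j < size c')%N ->
     nth (vertex0 k) c' j = nth (vertex0 k) c ((m + j) %% size c).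
Proof.
move=> k_gt0 hc hc' E.
have p'_gt0 := dB_cycle_size_gt0 hc'.
pose w := wseq (cycle_config c') 0 (size c' + k).
have {E} := congr1 (fun nu => nu 0 w) E; rewrite /= /nu_C !bpc_of_sum => E.
have in_c' : (\sum_(m < size c') nat_of_bool (in_cyl (cycle_config c') m 0 w) != 0)%N.
  by apply/sum_nat_neq0P; exists (Ordinal p'_gt0); rewrite in_cyl_wseq size_wseq !addr0.
have : (\sum_(m < size c) nat_of_bool (in_cyl (cycle_config c) m 0 w) != 0)%N.
  apply: contra in_c' => /eqP H; move: E; rewrite H mul0r => /esym /eqP.
  by rewrite mulf_eq0 invr_eq0 !pnatr_eq0 (negbTE (lt0n_neq0 p'_gt0)) orbF.
case/sum_nat_neq0P => m; rewrite in_cyl_wseq addr0 => /eqP Hw.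
exists m => // j hj; apply: (eq_tuple_nth (x0:=false)) => l hl.
rewrite -(modn_small hj) -cycle_config_window_nat //.
rewrite -(nth_wseq (cycle_config c') 0 (n:=size c' + k)); last lia.
rewrite -/w -Hw nth_wseq; last by rewrite /w size_wseq; lia.
rewrite (modn_small hj) -(cycle_config_window_nat k_gt0 hc (m + j)%N hl).
by congr cycle_config; rewrite !PoszD; ring.
Qed.

Lemma nu_C_eq_rot (R : realFieldType) k (c c' : seq (k.-tuple bool)) :
  (0 < k)%N -> dB_cycle c -> dB_cycle c' ->
  (nu_C R c = nu_C R c' <-> exists i : nat, c' = rot i c).
Proof.
move=> k_gt0 hc hc'; split; last by case=> i ->; rewrite nu_C_rot // dB_cycle_size_gt0.
move=> E.
have [m hm Hm] := nu_C_eq_shift k_gt0 hc hc' E.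
have [m' hm' Hm'] := nu_C_eq_shift k_gt0 hc' hc (esym E).
have le_c'c : (size c' <= size c)%N.
  apply: uniq_leq_size (dB_cycle_uniq hc') _ => x /(nthP (vertex0 k)) [j hj <-].
  by rewrite Hm // mem_nth // ltn_pmod // dB_cycle_size_gt0.
have le_cc' : (size c <= size c')%N.
  apply: uniq_leq_size (dB_cycle_uniq hc) _ => x /(nthP (vertex0 k)) [j hj <-].
  by rewrite Hm' // mem_nth // ltn_pmod // dB_cycle_size_gt0.
exists m; apply: (eq_from_nth (x0 := vertex0 k)); first by rewrite size_rot; lia.
by move=> j hj; rewrite Hm // nth_rot_mod //; [exact: ltnW | lia].
Qed.

(** * Circulations on G_k *)

Section Circulation.
Variables (R : realFieldType) (k : nat).

Definition out_flow (F : Xk k -> R) (v : seq bool) := \sum_(x : Xk k | take k x == v) F x.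
Definition in_flow (F : Xk k -> R) (v : seq bool) := \sum_(x : Xk k | behead x == v) F x.
Definition circulation (F : Xk k -> R) :=
  forall v, size v = k -> out_flow F v = in_flow F v.
Definition flow_support (F : Xk k -> R) : {set Xk k} := [set x | F x != 0].

(* Apply LTI to A = {0, ..., k-1} and the shift t = 1. *)
Lemma LTI_circulation (mu : {ffun Xk k -> R}) : LTI mu -> circulation mu.
Proof.
move=> mu_LTI v hv; pose A := [set i : 'I_k.+1 | (i < k)%N].
have A_nth l (hl : (l < k)%N) : Ordinal (leqW hl) \in A by rewrite inE.
transitivity (\sum_(x : Xk k | [forall i in A, tnth x i == nth false v i]) mu x).
  apply: eq_bigl => x /=; apply/eqP/forall_inP => [<- i|Hx].
  - by rewrite inE => hi; rewrite (tnth_nth false) nth_take.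
  - apply: (eq_from_nth (x0:=false)); first by rewrite size_takel ?size_tuple.
    move=> l; rewrite size_takel ?size_tuple // => hl.
    by rewrite nth_take //; have /eqP := Hx _ (A_nth l hl); rewrite (tnth_nth false).
rewrite (mu_LTI A 1%N (nth false v)); last by move=> i; rewrite inE; lia.
apply: eq_bigl => x /=; apply/forall_inP/eqP => [Hx|<- i].
- apply: (eq_from_nth (x0:=false)); first by rewrite size_behead size_tuple.
  move=> l; rewrite size_behead size_tuple /= => hl.
  by rewrite nth_behead; have /eqP := Hx _ (A_nth l hl); rewrite addn1.
- by rewrite inE => hi; rewrite nth_behead addn1.
Qed.

Lemma LTI_lincomb (mu nu g : {ffun Xk k -> R}) (a b : R) :
  LTI mu -> LTI nu -> (forall x, g x = a * mu x + b * nu x) -> LTI g.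
Proof.
move=> mu_LTI nu_LTI Hg A t y hA.
under eq_bigr => x _ do rewrite Hg.
rewrite big_split /= -!mulr_sumr (mu_LTI A t y hA) (nu_LTI A t y hA).
under [RHS]eq_bigr => x _ do rewrite Hg.
by rewrite big_split /= -!mulr_sumr.
Qed.

End Circulation.

Section CycleEdges.
Variables (k : nat) (c : seq (k.-tuple bool)).
Hypotheses (k_gt0 : (0 < k)%N) (hc : dB_cycle c).
Local Notation p := (size c).
Let p_gt0 : (0 < p)%N := dB_cycle_size_gt0 hc.

Definition cycle_edge (m : nat) : Xk k := window (cycle_config c) k.+1 m%:Z.

Definition is_cycle_edge (x : Xk k) := [exists m : 'I_p, cycle_edge m == x].

Lemma take_cycle_edge m : take k (cycle_edge m) = nth (vertex0 k) c (m %% p).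
Proof.
apply: (eq_from_nth (x0:=false)); first by rewrite size_take size_tuple ltnSn size_tuple.
move=> l; rewrite size_take size_tuple ltnSn => hl.
by rewrite nth_take ?nth_wseq //; [exact: cycle_config_window_nat | lia].
Qed.

Lemma behead_cycle_edge m : behead (cycle_edge m) = nth (vertex0 k) c (m.+1 %% p).
Proof.
apply: (eq_from_nth (x0:=false)); first by rewrite size_behead !size_tuple.
move=> l; rewrite size_behead size_tuple /= => hl.
rewrite (nth_map 0%N) ?size_iota // nth_iota // -(cycle_config_window_nat k_gt0 hc m.+1 hl).
by congr cycle_config; rewrite !PoszD; ring.
Qed.

Lemma cycle_edge_inj m1 m2 : (m1 < p)%N -> (m2 < p)%N -> cycle_edge m1 = cycle_edge m2 -> m1 = m2.
Proof.
move=> h1 h2 /(congr1 (fun x : Xk k => take k x)).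
by rewrite !take_cycle_edge !modn_small // => /val_inj /(nth_dB_cycle_inj hc h1 h2).
Qed.

Lemma cycle_edge_take x j : is_cycle_edge x -> (j < p)%N ->
  take k x = nth (vertex0 k) c j -> x = cycle_edge j.
Proof.
case/existsP => m /eqP <- hj; rewrite take_cycle_edge modn_small // => /val_inj.
by move/(nth_dB_cycle_inj hc (ltn_ord m) hj) ->.
Qed.

Lemma cycle_edge_behead x j : is_cycle_edge x -> (j < p)%N ->
  behead x = nth (vertex0 k) c (j.+1 %% p) -> x = cycle_edge j.
Proof.
case/existsP => m /eqP <- hj; rewrite behead_cycle_edge => /val_inj.
move/(nth_dB_cycle_inj hc (ltn_pmod _ p_gt0) (ltn_pmod _ p_gt0)).
by have := ltn_ord m; rewrite -addn1 -[j.+1]addn1 => hm /eqP; rewrite eqn_modDr !modn_small // => /eqP ->.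
Qed.

Lemma pi_k_nu_C (R : realFieldType) x :
  pi_k k (nu_C R c) x = (is_cycle_edge x)%:R / p%:R.
Proof.
rewrite ffunE /nu_C bpc_of_sum; congr (_%:R / _).
under eq_bigr => m _ do rewrite in_cyl_window.
case: (boolP (is_cycle_edge x)) => [/existsP [m0 /eqP E0] | /existsPn H].
- rewrite (bigD1 m0) /=; last by apply/eqP.
  rewrite (introT eqP E0) big1 ?addn0 // => m /negbTE hm; case: eqP => // E.
  have /val_inj Em : val m = val m0.
    by apply: cycle_edge_inj (ltn_ord m) (ltn_ord m0) _; rewrite E0; exact: E.
  by rewrite Em eqxx in hm.
- by rewrite big1 // => m _; have := H m; rewrite /cycle_edge => /negbTE ->.
Qed.

Lemma nu_C_in_Mk (R : realFieldType) : in_Mk (pi_k k (nu_C R c)).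
Proof. exact: bpc_of_in_Mk p_gt0 (cycle_config_period c). Qed.

End CycleEdges.

(** * Peeling cycles off a circulation *)

Lemma exists_periodic_iterate (T : finType) (f : T -> T) (y0 : T) :
  exists i, fcycle f (orbit f (iter i f y0)).
Proof.
have : ~~ uniq (traject f y0 #|T|.+1).
  apply/negP => /card_uniqP; rewrite size_traject => E.
  by have := max_card (mem (traject f y0 #|T|.+1)); rewrite E ltnn.
case/(uniqPn y0) => i [j [ij]]; rewrite size_traject => jn.
rewrite !nth_traject //; last by lia.
move=> Eij; exists i; apply: (all_iffLR orbitPcycle 3 0).
exists (j - i).-1; rewrite -iterD.
by have -> : ((j - i).-1.+1 + i = j)%N by lia.
Qed.

Lemma dB_cycle_orbit k (f : k.-tuple bool -> k.-tuple bool) (y : k.-tuple bool) :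
  fcycle f (orbit f y) -> {in orbit f y, forall u, dB_edge u (f u)} ->
  dB_cycle (orbit f y).
Proof.
move=> f_cycle f_edge; apply/and3P; split.
- by apply/eqP => E; have := in_orbit f y; rewrite E.
- exact: orbit_uniq.
- apply: (@sub_in_cycle _ [pred z | z \in orbit f y] (frel f) _ _ _ _ f_cycle).
    by move=> u w hu _ /eqP <-; exact: f_edge.
  by apply/allP.
Qed.

Lemma eq_take_behead k (x y : Xk k) : (0 < k)%N ->
  take k x = take k y -> behead x = behead y -> x = y.
Proof.
move=> k_gt0 Ht Hb; apply: (eq_tuple_nth (x0:=false)) => -[|l] hl.
- by have := congr1 (fun s => nth false s 0) Ht; rewrite /= !nth_take.
- by have := congr1 (fun s => nth false s l) Hb; rewrite /= !nth_behead.
Qed.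

Lemma drop1_take (s : seq bool) (k : nat) : drop 1 (take k s) = take k.-1 (behead s).
Proof. by case: s => [|a s]; case: k => [|k] //=; rewrite ?drop0 ?take0. Qed.

Section Peel.
Variables (R : realFieldType) (k : nat) (F : Xk k -> R).
Hypotheses (k_gt0 : (0 < k)%N) (F_ge0 : forall x, 0 <= F x) (F_circ : circulation F).

(* Leave every vertex entered with positive mass by an edge of positive mass;
   conservation makes such an edge exist, and its head is again entered with
   positive mass.  Iterating this successor map closes a cycle. *)
Lemma circulation_support_cycle : (exists x, F x != 0) ->
  exists c : seq (k.-tuple bool), dB_cycle c /\ (forall x, is_cycle_edge c x -> 0 < F x).
Proof.
move=> [x0 Fx0_neq0].
pose entered (v : k.-tuple bool) := 0 < in_flow F v.
have entered_head (x : Xk k) : 0 < F x -> entered (behead_tuple x).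
  by move=> Fx; rewrite /entered /in_flow (bigD1 x) //= ltr_wpDr // sumr_ge0.
pose f (v : k.-tuple bool) : k.-tuple bool :=
  if [pick x : Xk k | (take k x == v) && (0 < F x)] is Some x
  then behead_tuple x else v.
have fP v : entered v ->
    exists x : Xk k, [/\ take k x = v, f v = behead_tuple x & 0 < F x].
  move=> hv; rewrite /f; case: pickP => [x /andP[/eqP hx Fx] | H]; first by exists x.
  suff : out_flow F v = 0 by rewrite F_circ ?size_tuple // => E; rewrite /entered E ltxx in hv.
  apply: big1 => x /eqP hx; have := H x; rewrite hx eqxx /= => /negbT.
  by rewrite -leNgt => hle; apply/eqP; rewrite eq_le hle F_ge0.
have entered_iter n v : entered v -> entered (iter n f v).
  elim: n => [//|n IH] /IH /fP [x [_ Ef Fx]] /=; rewrite Ef; exact: entered_head.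
have [i f_cycle] := exists_periodic_iterate f (behead_tuple x0).
set y := iter i f _ in f_cycle.
have entered_orbit u : u \in orbit f y -> entered u.
  rewrite -fconnect_orbit => /iter_findex <-; apply/entered_iter/entered_iter.
  by apply: entered_head; rewrite lt_def Fx0_neq0 F_ge0.
have hc : dB_cycle (orbit f y).
  apply: dB_cycle_orbit => // u /entered_orbit /fP [x [hx -> _]].
  by rewrite /dB_edge /= -hx drop1_take.
exists (orbit f y); split => // _ /existsP [m /eqP <-].
set c := orbit f y; set z := nth (vertex0 k) c m.
have [x [hx Efz Fx]] := fP z (entered_orbit z (mem_nth _ (ltn_ord m))).
have Ef : f z = nth (vertex0 k) c (m.+1 %% size c).
  by have /eqP := (cycle_nthP (vertex0 k) (frel f) c).1 f_cycle m (ltn_ord m).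
suff -> : cycle_edge c m = x by [].
apply: eq_take_behead => //.
- by rewrite take_cycle_edge // modn_small // hx.
- by rewrite behead_cycle_edge // -Ef Efz.
Qed.

Lemma peel_cycle : (exists x, F x != 0) ->
  exists (c : seq (k.-tuple bool)) (w : R),
  [/\ dB_cycle c, 0 < w,
      forall x, 0 <= F x - w * pi_k k (nu_C R c) x,
      circulation (fun x => F x - w * pi_k k (nu_C R c) x) &
      (#|flow_support (fun x => F x - w * pi_k k (nu_C R c) x)%R| < #|flow_support F|)%N].
Proof.
move=> F_neq0; have [c [hc F_gt0]] := circulation_support_cycle F_neq0.
have p_gt0 := dB_cycle_size_gt0 hc.
have [j _ Fj_min] := @arg_minP _ R _ (Ordinal p_gt0) xpredT (fun m => F (cycle_edge c m)) isT.
set a := F (cycle_edge c j) in Fj_min.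
have edge_j : is_cycle_edge c (cycle_edge c j) by apply/existsP; exists j.
have a_gt0 : 0 < a by exact: F_gt0.
(* the weight a * size c removes mass a from every edge of c *)
have scaled_nu_C x : a * (size c)%:R * pi_k k (nu_C R c) x = a * (is_cycle_edge c x)%:R.
  by rewrite pi_k_nu_C //; field; rewrite pnatr_eq0 -lt0n.
exists c, (a * (size c)%:R); split => //.
- by rewrite mulr_gt0 // ltr0n.
- move=> x; rewrite scaled_nu_C subr_ge0.
  case: (boolP (is_cycle_edge c x)) => [/existsP [m /eqP <-]|_]; last by rewrite mulr0.
  by rewrite mulr1 Fj_min.
- move=> v hv; rewrite /out_flow /in_flow !sumrB -!mulr_sumr.
  have [_ _ nu_LTI] := nu_C_in_Mk hc R.
  have := LTI_circulation nu_LTI hv; rewrite /out_flow /in_flow => ->.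
  by have := F_circ hv; rewrite /out_flow /in_flow => ->.
- apply: proper_card; apply/properP; split.
    apply/subsetP => x; rewrite !inE; apply: contra => /eqP Fx.
    rewrite scaled_nu_C; case: (boolP (is_cycle_edge c x)) => hE; last by rewrite Fx mulr0 subr0.
    by have := F_gt0 x hE; rewrite Fx ltxx.
  exists (cycle_edge c j); first by rewrite inE lt0r_neq0.
  by rewrite inE scaled_nu_C edge_j mulr1 subrr eqxx.
Qed.

End Peel.

Lemma circulation_cycle_decomposition (R : realFieldType) k (F : Xk k -> R) :
  (0 < k)%N -> (forall x, 0 <= F x) -> circulation F ->
  exists s : seq (R * seq (k.-tuple bool)),
    [/\ all (fun cw => dB_cycle cw.2) s, all (fun cw => 0 <= cw.1) s &
        forall x, F x = \sum_(cw <- s) cw.1 * pi_k k (nu_C R cw.2) x].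
Proof.
move=> k_gt0; move: {2}#|_| (leqnn #|flow_support F|) => n.
elim: n F => [|n IH] F supp_F F_ge0 F_circ.
  exists [::]; split => // x; rewrite big_nil.
  move: supp_F; rewrite leqn0 cards_eq0 => /eqP S0.
  have : x \notin flow_support F by rewrite S0 inE.
  by rewrite inE negbK => /eqP.
case: (pickP (fun x => F x != 0)) => [x0 Fx0|F0]; last first.
  by exists [::]; split => // x; rewrite big_nil; have /negbFE/eqP := F0 x.
have [c [w [hc w_gt0 G_ge0 G_circ supp_G]]] := peel_cycle k_gt0 F_ge0 F_circ (ex_intro _ x0 Fx0).
have [s [s_cycles s_ge0 Hs]] := IH _ (ltnSE (leq_trans supp_G supp_F)) G_ge0 G_circ.
exists ((w, c) :: s); split; rewrite /= ?hc ?ltW //.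
by move=> x; rewrite big_cons /= -Hs; ring.
Qed.

(** * Extreme points of M_k *)

Lemma circulation_on_cycle_const (R : realFieldType) k (c : seq (k.-tuple bool))
    (F : Xk k -> R) :
  (0 < k)%N -> dB_cycle c -> circulation F -> (forall x, ~~ is_cycle_edge c x -> F x = 0) ->
  forall x, F x = (is_cycle_edge c x)%:R * F (cycle_edge c 0).
Proof.
move=> k_gt0 hc F_circ F_off.
have edge_m m : (m < size c)%N -> is_cycle_edge c (cycle_edge c m).
  by move=> hm; apply/existsP; exists (Ordinal hm).
have F_single x0 (Q : pred (Xk k)) : Q x0 ->
    (forall x, is_cycle_edge c x -> Q x -> x = x0) -> \sum_(x | Q x) F x = F x0.
  move=> Qx0 Q_uniq; apply: big_pred1_support => // x Qx; apply: contraNeq => Fx.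
  by apply/eqP/Q_uniq => //; apply: contraNT Fx => /F_off ->.
(* the only edge entering vertex c_(m+1) is c_m -> c_(m+1), the only one leaving it
   is c_(m+1) -> c_(m+2) *)
have F_succ m : (m.+1 < size c)%N -> F (cycle_edge c m.+1) = F (cycle_edge c m).
  move=> hm; have := F_circ (nth (vertex0 k) c m.+1) (size_tuple _).
  rewrite /out_flow /in_flow (F_single (cycle_edge c m.+1)); first last.
  - by move=> x hx /eqP; apply: cycle_edge_take.
  - by rewrite take_cycle_edge // modn_small.
  rewrite (F_single (cycle_edge c m)) // => [|x hx /eqP].
    by rewrite behead_cycle_edge // modn_small.
  by rewrite -(modn_small hm); apply: cycle_edge_behead => //; lia.
have F_const m : (m < size c)%N -> F (cycle_edge c m) = F (cycle_edge c 0).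
  by elim: m => [//|m IH] hm; rewrite F_succ // IH //; lia.
move=> x; case: (boolP (is_cycle_edge c x)) => [/existsP [m /eqP <-] | hx].
  by rewrite mul1r F_const.
by rewrite mul0r F_off.
Qed.

Lemma nu_C_extreme (R : realFieldType) k (c : seq (k.-tuple bool)) :
  (0 < k)%N -> dB_cycle c -> extreme_Mk (pi_k k (nu_C R c)).
Proof.
move=> k_gt0 hc; split; first exact: nu_C_in_Mk.
move=> a b t [a_ge0 a_sum1 a_LTI] [b_ge0 b_sum1 b_LTI] /andP[t_gt0 t_lt1] E.
have ab_off x : ~~ is_cycle_edge c x -> a x = 0 /\ b x = 0.
  move=> hx; have := E x; rewrite pi_k_nu_C // (negbTE hx) mul0r.
  by have := a_ge0 x; have := b_ge0 x; split; nra.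
have Ha := circulation_on_cycle_const k_gt0 hc (LTI_circulation a_LTI) (fun x hx => (ab_off x hx).1).
have Hb := circulation_on_cycle_const k_gt0 hc (LTI_circulation b_LTI) (fun x hx => (ab_off x hx).2).
pose N : R := \sum_(x : Xk k) (is_cycle_edge c x)%:R.
have sum_const (g : {ffun Xk k -> R}) :
    (forall x, g x = (is_cycle_edge c x)%:R * g (cycle_edge c 0)) ->
    \sum_x g x = g (cycle_edge c 0) * N.
  by move=> Hg; rewrite /N mulr_sumr; apply: eq_bigr => x _; rewrite Hg mulrC.
have N_neq0 : N != 0.
  by apply: contra_eq_neq a_sum1 => N0; rewrite sum_const // N0 mulr0 eq_sym oner_neq0.
have a0_b0 : a (cycle_edge c 0) = b (cycle_edge c 0).
  by apply: (mulIf N_neq0); rewrite -!sum_const // a_sum1 b_sum1.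
by apply/ffunP => x; rewrite Ha Hb a0_b0.
Qed.

Lemma in_Mk_residual (R : realFieldType) k (mu nu : {ffun Xk k -> R}) (w : R) :
  in_Mk mu -> in_Mk nu -> (forall x, 0 <= mu x - w * nu x) -> w < 1 ->
  in_Mk [ffun x => (mu x - w * nu x) / (1 - w)].
Proof.
move=> [_ mu_sum1 mu_LTI] [_ nu_sum1 nu_LTI] res_ge0 w_lt1.
have w1_neq0 : 1 - w != 0 by rewrite subr_eq0 gt_eqF.
split.
- by move=> x; rewrite ffunE divr_ge0 // subr_ge0 ltW.
- under eq_bigr => x _ do rewrite ffunE.
  by rewrite -mulr_suml sumrB -mulr_sumr mu_sum1 nu_sum1 mulr1 divff.
- apply: (LTI_lincomb (a := (1 - w)^-1) (b := - (w / (1 - w))) mu_LTI nu_LTI) => x.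
  by rewrite ffunE; field.
Qed.

(* An extreme point mu dominates w pi_k nu_C for the first cycle peeled off
   it; if w < 1, mu is a proper convex combination of pi_k nu_C and the
   normalized residual, so extremality forces them to coincide. *)
Lemma extreme_Mk_nu_C (R : realFieldType) k (mu : {ffun Xk k -> R}) :
  (0 < k)%N -> extreme_Mk mu ->
  exists c : seq (k.-tuple bool), dB_cycle c /\ mu = pi_k k (nu_C R c).
Proof.
move=> k_gt0 [[mu_ge0 mu_sum1 mu_LTI] mu_ext].
have mu_neq0 : exists x, mu x != 0.
  apply/existsP; apply: contra_eqT mu_sum1 => /existsPn mu0.
  by rewrite big1 ?(eq_sym 0) ?oner_neq0 // => x _; apply/eqP/negPn/mu0.
have [c [w [hc w_gt0 res_ge0 _ _]]] := peel_cycle k_gt0 mu_ge0 (LTI_circulation mu_LTI) mu_neq0.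
exists c; split => //; set nu := pi_k k (nu_C R c).
have nu_Mk := nu_C_in_Mk hc R.
have [_ nu_sum1 _] := nu_Mk.
have res_sum : \sum_x (mu x - w * nu x) = 1 - w.
  by rewrite sumrB -mulr_sumr mu_sum1 nu_sum1 mulr1.
have w_le1 : w <= 1 by rewrite -subr_ge0 -res_sum sumr_ge0.
have [w_eq1 | w_lt1] := eqVneq w 1; last first.
  have {w_lt1} w_lt1 : w < 1 by rewrite lt_neqAle w_lt1 w_le1.
  pose b := [ffun x => (mu x - w * nu x) / (1 - w)].
  have w1_neq0 : 1 - w != 0 by rewrite subr_eq0 gt_eqF.
  have mu_comb x : mu x = w * nu x + (1 - w) * b x by rewrite /b ffunE; field.
  have nu_eq_b : nu = b.
    apply: (mu_ext nu b w nu_Mk) => //; first exact: in_Mk_residual.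
    by rewrite w_gt0 w_lt1.
  by apply/ffunP => x; rewrite mu_comb -nu_eq_b; ring.
apply/ffunP => x; apply/eqP; rewrite -subr_eq0 -[nu x]mul1r -w_eq1.
have res0 : \sum_x (mu x - w * nu x) = 0 by rewrite res_sum w_eq1 subrr.
exact/eqP/(psumr_eq0P (fun x _ => res_ge0 x) res0).
Qed.

Lemma in_Mk_comb_nuC (R : realFieldType) k (mu : {ffun Xk k -> R}) :
  (0 < k)%N -> in_Mk mu ->
  exists s : seq (R * seq (k.-tuple bool)),
    [/\ all (fun cw => dB_cycle cw.2) s, all (fun cw => 0 <= cw.1) s,
        \sum_(cw <- s) cw.1 = 1 & mu = pi_k k (comb_nuC s)].
Proof.
move=> k_gt0 [mu_ge0 mu_sum1 mu_LTI].
have [s [s_cycles s_ge0 Hs]] :=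
  circulation_cycle_decomposition k_gt0 mu_ge0 (LTI_circulation mu_LTI).
exists s; split => //; last first.
  apply/ffunP => x; rewrite Hs [RHS]ffunE /comb_nuC.
  by apply: eq_bigr => cw _; rewrite ffunE.
rewrite -mu_sum1 (eq_bigr _ (fun x _ => Hs x)) exchange_big /=.
rewrite big_seq_cond [RHS]big_seq_cond; apply: eq_bigr => cw /andP[s_cw _].
have [_ nu_sum1 _] := nu_C_in_Mk (allP s_cycles cw s_cw) R.
by rewrite -mulr_sumr nu_sum1 mulr1.
Qed.

Theorem theorem3 (R : realFieldType) (k : nat) (hk : (1 <= k)%N) :
  [/\ (forall c : seq (k.-tuple bool), dB_cycle c -> is_kprim_BPC k (nu_C R c)),
      (forall c c' : seq (k.-tuple bool), dB_cycle c -> dB_cycle c' ->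
         (nu_C R c = nu_C R c' <-> exists i : nat, c' = rot i c)),
      (forall nu : cylmeasure R, is_kprim_BPC k nu ->
         exists c : seq (k.-tuple bool), dB_cycle c /\ nu = nu_C R c),
      (forall mu : {ffun Xk k -> R},
         extreme_Mk mu <-> exists c : seq (k.-tuple bool), dB_cycle c /\ mu = @pi_k R k (nu_C R c))
  & (forall mu : {ffun Xk k -> R}, in_Mk mu ->
         exists s : seq (R * seq (k.-tuple bool)),
           [/\ all (fun cw => dB_cycle cw.2) s,
               all (fun cw => 0 <= cw.1) s,
               \sum_(cw <- s) cw.1 = 1
             & mu = @pi_k R k (comb_nuC s)])].
Proof.
split.
- move=> c hc; exists (cycle_config c), (size c); split => //.
    exact: cycle_config_min_period.
  exact: cycle_config_k_primitive.
- by move=> c c' hc hc'; apply: nu_C_eq_rot.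
- move=> nu [eta [p [eta_min eta_prim ->]]]; exists (window_cycle eta p k); split.
    exact: window_cycle_dB_cycle.
  by rewrite /nu_C cycle_config_window_cycle // size_window_cycle.
- move=> mu; split; first exact: extreme_Mk_nu_C.
  by move=> [c [hc ->]]; exact: nu_C_extreme.
- by move=> mu; apply: in_Mk_comb_nuC.
Qed.
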